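(* Let $X,Y$ be proper metric spaces, $p\in[1,\infty)$, $f:X\to Y$ a continuous coarse map, $E^p_X$ an $L^p$-$X$-module and $E^p_Y$ an $L^p$-$Y$-module. Then for every $\varepsilon>0$ there exist an isometric operator $V_f:E^p_X\to E^p_Y$ and a contractive operator $V_f^+:E^p_Y\to E^p_X$ with $V_f^+V_f=I$ such that $\mathrm{supp}(V_f)\subseteq\{(x,y)\in X\times Y:d(f(x),y)\le\varepsilon\}$ and $\mathrm{supp}(V_f^+)\subseteq\{(y,x)\in Y\times X:d(f(x),y)\le\varepsilon\}$.
   Context: An $L^p$-$X$-module is $E^p_X=\ell^p(Z_X)\otimes\ell^p=\ell^p(Z_X,\ell^p(\mathbb N))$ with $Z_X\subseteq X$ a countable dense subset and $C_0(X)$ (and bounded Borel functions) acting by pointwise multiplication on the $Z_X$ coordinate; $\chi_U$ denotes multiplication by the indicator of $U$. For a bounded $T:E^p_X\to E^p_Y$, $\mathrm{supp}(T)$ is the set of $(x,y)\in X\times Y$ such that $\chi_VT\chi_U\neq0$ for all open neighbourhoods $U$ of $x$ and $V$ of $y$ (and analogously for operators $E^p_Y\to E^p_X$, giving subsets of $Y\times X$). A Borel map $f$ is coarse if preimages of bounded sets are bounded and for each $R>0$ there is $R'$ with $d(f(x),f(y))\le R'$ whenever $d(x,y)\le R$. *)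

From HB Require Import structures.
From mathcomp Require Import all_boot all_order all_algebra.
From mathcomp Require Import all_classical all_reals all_analysis.
From mathcomp Require Import complex.
Set Implicit Arguments. Unset Strict Implicit. Unset Printing Implicit Defensive.
Import Order.TTheory GRing.Theory Num.Theory.
Local Open Scope classical_set_scope.
Local Open Scope ring_scope.

Definition is_metric (R : realType) (X : Type) (d : X -> X -> R) : Prop :=
  [/\ (forall x y, 0 <= d x y),
      (forall x y, d x y = 0 <-> x = y),
      (forall x y, d x y = d y x) &
      (forall x y z, d x z <= d x y + d y z)].

Definition ball_d (R : realType) (X : Type) (d : X -> X -> R) (x : X) (r : R) : set X :=
  [set y | d x y < r].

Definition closed_ball_d (R : realType) (X : Type) (d : X -> X -> R) (x : X) (r : R) : set X :=
  [set y | d x y <= r].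

Definition open_d (R : realType) (X : Type) (d : X -> X -> R) (U : set X) : Prop :=
  forall x, U x -> exists r, 0 < r /\ ball_d d x r `<=` U.

Definition compact_d (R : realType) (X : Type) (d : X -> X -> R) (K : set X) : Prop :=
  forall (I : Type) (F : I -> set X), (forall i, open_d d (F i)) ->
    K `<=` \bigcup_i F i ->
    exists J : set I, finite_set J /\ K `<=` \bigcup_(i in J) F i.

Definition proper_metric (R : realType) (X : Type) (d : X -> X -> R) : Prop :=
  is_metric d /\ forall x r, compact_d d (closed_ball_d d x r).

Definition dense_d (R : realType) (X : Type) (d : X -> X -> R) (Z : set X) : Prop :=
  forall x r, 0 < r -> exists z, Z z /\ d x z < r.

Definition bounded_d (R : realType) (X : Type) (d : X -> X -> R) (S : set X) : Prop :=
  exists r, forall a b, S a -> S b -> d a b <= r.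

Definition continuous_d (R : realType) (X Y : Type) (dX : X -> X -> R) (dY : Y -> Y -> R)
  (f : X -> Y) : Prop :=
  forall x eps, 0 < eps -> exists delta, 0 < delta /\
    forall x', dX x x' < delta -> dY (f x) (f x') < eps.

Definition coarse_map (R : realType) (X Y : Type) (dX : X -> X -> R) (dY : Y -> Y -> R)
  (f : X -> Y) : Prop :=
  (forall B, bounded_d dY B -> bounded_d dX (f @^-1` B)) /\
  (forall r, 0 < r -> exists r', forall x y, dX x y <= r -> dY (f x) (f y) <= r').

(* ---------- L^p-X-modules E^p_X = l^p(Z_X, l^p(N)) ---------- *)
(* Vectors are functions X -> nat -> R[i] vanishing off Z_X (x) N. *)

Definition lp_sum (R : realType) (X : choiceType) (p : R) (u : X -> nat -> R[i]) : \bar R :=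
  (\esum_(i in [set: X * nat]) ((Normc.normc (u i.1 i.2)) `^ p)%:E)%E.

Definition in_Ep (R : realType) (X : choiceType) (Z : set X) (p : R)
  (u : X -> nat -> R[i]) : Prop :=
  (forall x n, ~ Z x -> u x n = 0) /\ (lp_sum p u < +oo)%E.

Definition lp_norm (R : realType) (X : choiceType) (p : R) (u : X -> nat -> R[i]) : R :=
  (fine (lp_sum p u)) `^ (p^-1).

Definition chi (R : realType) (X : Type) (U : set X) (u : X -> nat -> R[i]) : X -> nat -> R[i] :=
  fun x n => if `[< U x >] then u x n else 0.

(* bounded linear operator E^p_X -> E^p_Y (only its values on E^p_X matter) *)
Definition bounded_op (R : realType) (X Y : choiceType) (ZX : set X) (ZY : set Y) (p : R)
  (T : (X -> nat -> R[i]) -> (Y -> nat -> R[i])) : Prop :=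
  [/\ (forall u, in_Ep ZX p u -> in_Ep ZY p (T u)),
      (forall (a : R[i]) u v, in_Ep ZX p u -> in_Ep ZX p v ->
          T (fun x n => a * u x n + v x n) = (fun y n => a * T u y n + T v y n)) &
      (exists C : R, forall u, in_Ep ZX p u -> lp_norm p (T u) <= C * lp_norm p u)].

Definition isometric_op (R : realType) (X Y : choiceType) (ZX : set X) (ZY : set Y) (p : R)
  (T : (X -> nat -> R[i]) -> (Y -> nat -> R[i])) : Prop :=
  bounded_op ZX ZY p T /\ forall u, in_Ep ZX p u -> lp_norm p (T u) = lp_norm p u.

Definition contractive_op (R : realType) (X Y : choiceType) (ZX : set X) (ZY : set Y) (p : R)
  (T : (X -> nat -> R[i]) -> (Y -> nat -> R[i])) : Prop :=
  bounded_op ZX ZY p T /\ forall u, in_Ep ZX p u -> lp_norm p (T u) <= lp_norm p u.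

Definition in_supp (R : realType) (X Y : choiceType) (dX : X -> X -> R) (dY : Y -> Y -> R)
  (ZX : set X) (p : R) (T : (X -> nat -> R[i]) -> (Y -> nat -> R[i])) (x : X) (y : Y) : Prop :=
  forall (U : set X) (V : set Y), open_d dX U -> U x -> open_d dY V -> V y ->
    exists u, in_Ep ZX p u /\ chi V (T (chi U u)) <> (fun _ _ => 0).

(** Choose a point [w x] of the dense set [Z_Y] within [eps] of [f x], and
    enumerate [Z_X] injectively by [idx].  Then
    [(x, n) |-> (w x, pickle (idx x, n))] is an injection of [Z_X * N] into
    [Z_Y * N]; transporting coordinates along it is an isometry [V_f], and
    restricting back along it is a contraction [V_f^+] with [V_f^+ V_f = 1].
    Both operators only connect [x] with points [w x'] for [x'] near [x], so
    continuity of [f] puts their supports within [eps] of the graph of [f]. *)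

From HB Require Import structures.
From mathcomp Require Import all_boot all_order all_algebra.
From mathcomp Require Import all_classical all_reals all_analysis.
From mathcomp Require Import complex.
From mathcomp Require Import lra.
Import Order.TTheory GRing.Theory Num.Theory.
Local Open Scope classical_set_scope.
Local Open Scope ring_scope.
Set Implicit Arguments. Unset Strict Implicit.
Unset Printing Implicit Defensive.

Lemma esum_setT_supp (R : realType) (T : choiceType) (A : set T) (a : T -> \bar R) :
  (forall t, ~ A t -> a t = 0%E) ->
  (\esum_(t in [set: T]) a t = \esum_(t in A) a t)%E.
Proof.
move=> a0; rewrite (esum_mkcond A); apply: eq_esum => t _.
by case: (boolP (t \in A)) => // /negP; rewrite inE => /a0.
Qed.

Lemma le_esum_setT (R : realType) (T : choiceType) (A : set T) (a : T -> \bar R) :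
  (forall t, 0 <= a t)%E -> (\esum_(t in A) a t <= \esum_(t in [set: T]) a t)%E.
Proof. by move=> a0; rewrite (esum_mkcond A); apply: le_esum => t _; case: ifP. Qed.

Section PushPull.
Variables (T S : choiceType) (K : pzRingType) (A : set T) (phi : T -> S).

Definition push (u : T -> K) (s : S) : K :=
  match pselect ((phi @` A) s) with
  | left h => u (s2val (cid2 h))
  | right _ => 0
  end.

Definition pull (v : S -> K) (t : T) : K := if `[< A t >] then v (phi t) else 0.

Lemma push_neq0 u s :
  push u s != 0 -> exists t, [/\ A t, phi t = s & u t != 0].
Proof.
rewrite /push; case: pselect => [h|_]; last by rewrite eqxx.
by case: (cid2 h) => t At ts ut; exists t.
Qed.

Lemma pushD (a : K) u v :
  push (fun t => a * u t + v t) = (fun s => a * push u s + push v s).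
Proof.
by apply/funext => s; rewrite /push; case: pselect => // _; rewrite mulr0 addr0.
Qed.

Lemma pullD (a : K) u v :
  pull (fun s => a * u s + v s) = (fun t => a * pull u t + pull v t).
Proof.
by apply/funext => t; rewrite /pull; case: asboolP => // _; rewrite mulr0 addr0.
Qed.

Hypothesis phi_inj : set_inj A phi.

Lemma push_phi u t : A t -> push u (phi t) = u t.
Proof.
move=> At; rewrite /push; case: pselect => [h|[]]; last by exists t.
case: (cid2 h) => t' At' phit' /=.
by rewrite (phi_inj (mem_set At') (mem_set At) phit').
Qed.

Lemma pull_push u : (forall t, ~ A t -> u t = 0) -> pull (push u) = u.
Proof.
move=> u0; apply/funext => t; rewrite /pull.
by case: asboolP => [/push_phi //|/u0].
Qed.

Variables (R : realType) (g : K -> \bar R).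
Hypothesis g0 : g 0 = 0%E.

Lemma esum_push u : (forall t, ~ A t -> u t = 0) ->
  (\esum_(s in [set: S]) g (push u s) = \esum_(t in [set: T]) g (u t))%E.
Proof.
move=> u0; rewrite (esum_setT_supp (A := phi @` A)); last first.
  move=> s As; have [->//|/push_neq0[t [At ts _]]] := eqVneq (push u s) 0.
  by case: As; exists t.
rewrite esum_image // (esum_setT_supp (A := A)) => [|t /u0 ->//].
by apply: eq_esum => t At; rewrite push_phi.
Qed.

Lemma esum_pull_le v : (forall c, 0 <= g c)%E ->
  (\esum_(t in [set: T]) g (pull v t) <= \esum_(s in [set: S]) g (v s))%E.
Proof.
move=> g_ge0; rewrite (esum_setT_supp (A := A)) => [|t At]; last first.
  by rewrite /pull asboolF.
rewrite (eq_esum (b := fun t => g (v (phi t)))) => [|t At]; last by rewrite /pull asboolT.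
rewrite -(esum_image A phi (g \o v)) //.
by apply: le_esum_setT => s; exact: g_ge0.
Qed.

End PushPull.

Lemma lp_sum_ge0 (R : realType) (X : choiceType) (p : R) (u : X -> nat -> R[i]) :
  (0 <= lp_sum p u)%E.
Proof. by apply: esum_ge0 => k _; rewrite lee_fin powR_ge0. Qed.

Lemma lp_norm_le (R : realType) (X Y : choiceType) (p : R)
    (u : X -> nat -> R[i]) (v : Y -> nat -> R[i]) :
  0 <= p -> (lp_sum p v < +oo)%E -> (lp_sum p u <= lp_sum p v)%E ->
  lp_norm p u <= lp_norm p v.
Proof.
move=> p0 vfin le_uv; have ufin := le_lt_trans le_uv vfin.
apply: ge0_ler_powR; rewrite ?invr_ge0 ?nnegrE ?fine_ge0 ?lp_sum_ge0 //.
by apply: fine_le; rewrite // ge0_fin_numE ?lp_sum_ge0.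
Qed.

Section Transport.
Variables (R : realType) (X Y : choiceType) (ZX : set X) (ZY : set Y) (p : R).
Variable phi : X * nat -> Y * nat.

Let A := ZX `*` [set: nat].

Definition transport (u : X -> nat -> R[i]) : Y -> nat -> R[i] :=
  fun y m => push A phi (fun k => u k.1 k.2) (y, m).

Definition pullback (v : Y -> nat -> R[i]) : X -> nat -> R[i] :=
  fun x n => pull A phi (fun k => v k.1 k.2) (x, n).

Hypotheses (p_gt0 : 0 < p) (phi_inj : set_inj A phi).
Hypothesis phi_ZY : forall k, ZX k.1 -> ZY (phi k).1.

Let p_neq0 : p != 0. Proof. by rewrite gt_eqF. Qed.

Let normp (c : R[i]) : \bar R := ((Normc.normc c) `^ p)%:E.

Let normp0 : normp 0 = 0%E.
Proof. by rewrite /normp Normc.normc0 powR0. Qed.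

Lemma lp_sum_transport u : (forall x n, ~ ZX x -> u x n = 0) ->
  lp_sum p (transport u) = lp_sum p u.
Proof.
move=> u0; rewrite /lp_sum /transport.
under eq_esum => k _ do rewrite -surjective_pairing.
by apply: (esum_push phi_inj normp0) => -[x n] /= Zx; rewrite u0 // => ?; apply: Zx.
Qed.

Lemma lp_sum_pullback_le v : (lp_sum p (pullback v) <= lp_sum p v)%E.
Proof.
rewrite /lp_sum /pullback; under eq_esum => k _ do rewrite -surjective_pairing.
by apply: (esum_pull_le phi_inj normp0) => c; rewrite lee_fin powR_ge0.
Qed.

Lemma isometric_op_transport : isometric_op ZX ZY p transport.
Proof.
have lp_transport u : in_Ep ZX p u -> lp_norm p (transport u) = lp_norm p u.
  by case=> u0 _; rewrite /lp_norm lp_sum_transport.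
split=> //; split.
- move=> u [u0 ufin]; split; last by rewrite lp_sum_transport.
  move=> y m Zy; apply/eqP/negP => /negP/push_neq0[k [[Zk _] kym _]].
  by apply: Zy; rewrite -[y]/((y, m).1) -kym; apply: phi_ZY.
- by move=> a u v _ _; apply/funext => y; apply/funext => m; rewrite /transport pushD.
- by exists 1 => u Eu; rewrite mul1r lp_transport.
Qed.

Lemma contractive_op_pullback : contractive_op ZY ZX p pullback.
Proof.
have lp_pullback v : in_Ep ZY p v -> lp_norm p (pullback v) <= lp_norm p v.
  by case=> _ vfin; apply: lp_norm_le (ltW p_gt0) vfin (lp_sum_pullback_le v).
split=> //; split.
- move=> v [_ vfin]; split; last exact: le_lt_trans (lp_sum_pullback_le v) vfin.
  by move=> x n Zx; rewrite /pullback /pull asboolF // => -[].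
- by move=> a u v _ _; apply/funext => x; apply/funext => n; rewrite /pullback pullD.
- by exists 1 => v Ev; rewrite mul1r lp_pullback.
Qed.

Lemma pullback_transport u : in_Ep ZX p u -> pullback (transport u) = u.
Proof.
case=> u0 _; apply/funext => x; apply/funext => n.
rewrite /pullback /transport; under eq_fun => k do rewrite -surjective_pairing.
by rewrite pull_push // => -[x' n'] /= Zx; rewrite u0 // => ?; apply: Zx.
Qed.

End Transport.

Lemma relabel_inj (X Y : choiceType) (ZX : set X) (w : X -> Y) (idx : X -> nat) :
  {in ZX &, injective idx} ->
  set_inj (ZX `*` [set: nat]) (fun k => (w k.1, pickle (idx k.1, k.2))).
Proof.
move=> idx_inj [x n] [x' n'] /[!inE] -[/= Zx _] [/= Zx' _] [_].
by move/(pcan_inj (@pickleK _)) => -[/idx_inj]; rewrite !inE => /(_ Zx Zx') -> ->.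
Qed.

Lemma dense_approx (R : realType) (X Y : Type) (dY : Y -> Y -> R) (ZY : set Y)
    (f : X -> Y) (e : R) :
  dense_d dY ZY -> 0 < e -> exists w : X -> Y, forall x, ZY (w x) /\ dY (f x) (w x) < e.
Proof.
by move=> dZY e0; exists (fun x => sval (cid (dZY (f x) e e0))) => x; case: cid.
Qed.

Lemma open_ball_d (R : realType) (X : Type) (d : X -> X -> R) x r :
  is_metric d -> open_d d (ball_d d x r).
Proof.
move=> [_ _ _ d_tri] y dxy; exists (r - d x y); split; first by rewrite subr_gt0.
by move=> z dyz; have := d_tri x y z; rewrite /ball_d /= in dxy dyz *; lra.
Qed.

Lemma ball_d_center (R : realType) (X : Type) (d : X -> X -> R) x r :
  is_metric d -> 0 < r -> ball_d d x r x.
Proof. by move=> [_ d_eq0 _ _] r0; rewrite /ball_d /= (proj2 (d_eq0 x x) erefl). Qed.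

Lemma in_supp_balls (R : realType) (X Y : choiceType) (dX : X -> X -> R)
    (dY : Y -> Y -> R) (Z : set X) (p : R) T x y r s :
  is_metric dX -> is_metric dY -> in_supp dX dY Z p T x y -> 0 < r -> 0 < s ->
  exists u, in_Ep Z p u /\
    chi (ball_d dY y s) (T (chi (ball_d dX x r) u)) <> (fun _ _ => 0).
Proof.
move=> mX mY xy r0 s0.
by apply: xy; [apply: open_ball_d | apply: ball_d_center | apply: open_ball_d
  | apply: ball_d_center].
Qed.

Lemma chi_neq0 (R : realType) (X : Type) (V : set X) (v : X -> nat -> R[i]) :
  chi V v <> (fun _ _ => 0) -> exists x n, V x /\ v x n != 0.
Proof.
move=> nz; apply: contrapT => none; apply: nz; apply/funext => x; apply/funext => n.
rewrite /chi; case: asboolP => // Vx; apply: contrapT => /eqP vxn.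
by apply: none; exists x, n.
Qed.

Section TransportSupport.
Variables (R : realType) (X Y : choiceType) (dX : X -> X -> R) (dY : Y -> Y -> R).
Variables (ZX : set X) (ZY : set Y) (p : R) (phi : X * nat -> Y * nat) (w : X -> Y).
Hypotheses (mX : is_metric dX) (mY : is_metric dY).
Hypothesis phi_w : forall k, (phi k).1 = w k.1.

Lemma transport_supp x y r s :
  in_supp dX dY ZX p (transport ZX phi) x y -> 0 < r -> 0 < s ->
  exists x', dX x x' < r /\ dY y (w x') < s.
Proof.
move=> xy r0 s0; have [u [_ /chi_neq0[y' [m [yy' ]]]]] := in_supp_balls mX mY xy r0 s0.
rewrite /transport => /push_neq0[k [_ phik]].
rewrite /chi; case: asboolP => [xk _|_]; last by rewrite eqxx.
by exists k.1; split => //; rewrite -phi_w phik.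
Qed.

Lemma pullback_supp y x r s :
  in_supp dY dX ZY p (pullback ZX phi) y x -> 0 < r -> 0 < s ->
  exists x', dX x x' < r /\ dY y (w x') < s.
Proof.
move=> yx r0 s0; have [v [_ /chi_neq0[x' [n [xx' ]]]]] := in_supp_balls mY mX yx s0 r0.
rewrite /pullback /pull; case: asboolP => [_|_]; last by rewrite eqxx.
rewrite /chi; case: asboolP => [yw _|_]; last by rewrite eqxx.
by exists x'; split => //; move: yw; rewrite phi_w.
Qed.

End TransportSupport.

Lemma le_dist_approx (R : realType) (X Y : Type) (dX : X -> X -> R) (dY : Y -> Y -> R)
    (f w : X -> Y) (e : R) x y :
  is_metric dY -> continuous_d dX dY f -> (forall x, dY (f x) (w x) <= e) ->
  (forall r s, 0 < r -> 0 < s -> exists x', dX x x' < r /\ dY y (w x') < s) ->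
  dY (f x) y <= e.
Proof.
move=> [_ _ dY_sym dY_tri] fc fw near_xy; apply/ler_addgt0Pr => c c0.
have c2 : 0 < c / 2 by lra.
have [del [del0 fdel]] := fc x (c / 2) c2.
have [x' [xx' yx']] := near_xy del (c / 2) del0 c2.
have := fdel x' xx'; have := fw x'; rewrite dY_sym in yx'.
have := dY_tri (f x) (f x') y; have := dY_tri (f x') (w x') y; lra.
Qed.

Theorem mainTheorem8 (R : realType) (X Y : choiceType)
  (dX : X -> X -> R) (dY : Y -> Y -> R) (ZX : set X) (ZY : set Y) (p : R) (f : X -> Y) :
  proper_metric dX -> proper_metric dY ->
  countable ZX -> dense_d dX ZX -> countable ZY -> dense_d dY ZY ->
  1 <= p ->
  continuous_d dX dY f -> coarse_map dX dY f ->
  forall eps : R, 0 < eps ->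
  exists (Vf : (X -> nat -> R[i]) -> (Y -> nat -> R[i]))
         (Vfp : (Y -> nat -> R[i]) -> (X -> nat -> R[i])),
    [/\ isometric_op ZX ZY p Vf,
        contractive_op ZY ZX p Vfp,
        (forall u, in_Ep ZX p u -> Vfp (Vf u) = u),
        (forall x y, in_supp dX dY ZX p Vf x y -> dY (f x) y <= eps) &
        (forall y x, in_supp dY dX ZY p Vfp y x -> dY (f x) y <= eps)].
Proof.
move=> [mX _] [mY _] /pcard_injP[idx idx_inj] _ _ dZY p_ge1 fc _ eps eps0.
have p_gt0 : 0 < p := lt_le_trans ltr01 p_ge1.
have [w w_approx] := dense_approx f dZY eps0.
pose phi (k : X * nat) := (w k.1, pickle (idx k.1, k.2)).
have phi_inj : set_inj (ZX `*` [set: nat]) phi := relabel_inj idx_inj.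
have fw x : dY (f x) (w x) <= eps by apply/ltW; case: (w_approx x).
exists (transport ZX phi), (pullback ZX phi); split.
- by apply: isometric_op_transport => // k _; case: (w_approx k.1).
- exact: contractive_op_pullback.
- exact: pullback_transport.
- move=> x y xy; apply: (le_dist_approx mY fc fw) => r s r0 s0.
  exact: (transport_supp mX mY _ xy r0 s0).
- move=> y x yx; apply: (le_dist_approx mY fc fw) => r s r0 s0.
  exact: (pullback_supp mX mY _ yx r0 s0).
Qed.
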